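(* Let $n\geq 4$ and let $\mathcal{H}_{2n}$ be the collection of subsets of $\{1,\dots,2n\}$ of the form $\{1,2,2k-1,2k\}$ for $2\le k\le n$, or $\{2k-1,2k,2k+1,2k+2\}$ for $2\le k\le n-1$. Then the collection of all subsets $B\subset\{1,\dots,2n\}$ with $|B|=4$ and $B\notin\mathcal{H}_{2n}$ is the set of bases of a (rank-four) matroid on $\{1,\dots,2n\}$ (called the $2n$-Vámos matroid $V_{2n}$).
   Context: A matroid on a finite set $E$ is given by a nonempty collection of independent sets closed under taking subsets and satisfying the exchange axiom; its bases are the maximal independent sets. *)

From mathcomp Require Import all_boot.
Set Implicit Arguments. Unset Strict Implicit. Unset Printing Implicit Defensive.

Definition is_matroid (T : finType) (I : {set {set T}}) : Prop :=
  [/\ I != set0,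
      (forall A B : {set T}, B \in I -> A \subset B -> A \in I) &
      (forall A B : {set T}, A \in I -> B \in I -> #|A| < #|B| ->
         exists2 x, x \in B :\: A & x |: A \in I)].

Definition matroid_bases (T : finType) (I : {set {set T}}) : {set {set T}} :=
  [set B in I | [forall C in I, (B \subset C) ==> (C == B)]].

(* Ground set {1,...,2n} is represented by 'I_(2n), element i <-> i+1.
   Hence {1,2,2k-1,2k} becomes {0,1,2k-2,2k-1} and
   {2k-1,2k,2k+1,2k+2} becomes {2k-2,2k-1,2k,2k+1}. *)
Definition in_H (n : nat) (B : {set 'I_(2 * n)}) : bool :=
  [exists k : 'I_n.+1, (2 <= k) &&
     [forall x : 'I_(2 * n), (x \in B) == (val x \in [:: 0; 1; 2 * k - 2; 2 * k - 1])]]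
  || [exists k : 'I_n, (2 <= k) &&
     [forall x : 'I_(2 * n), (x \in B) == (val x \in [:: 2 * k - 2; 2 * k - 1; 2 * k; 2 * k + 1])]].

From mathcomp Require Import all_boot.
From mathcomp Require Import zify.
Set Implicit Arguments. Unset Strict Implicit. Unset Printing Implicit Defensive.

(* V_2n is a sparse paving matroid: its independent sets are the sets of
   size at most 3 together with the 4-sets outside H_2n, and the exchange
   axiom for these can only fail if two distinct members of H_2n share three
   elements.  Every member of H_2n is a union of two blocks {2a-1, 2a} and
   {2b-1, 2b}; three elements of such a union meet both blocks, so they
   determine the pair {a, b} and hence the member. *)

Section SparsePaving.

Variables (T : finType) (r : nat) (H : pred {set T}).

Definition sparse_family : Prop :=
  forall X Y : {set T}, H X -> H Y -> r.-1 <= #|X :&: Y| -> X = Y.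

Definition sparse_paving_indep : {set {set T}} :=
  [set A : {set T} | (#|A| < r) || ((#|A| == r) && ~~ H A)].

Lemma in_sparse_paving_indep A :
  (A \in sparse_paving_indep) = (#|A| < r) || ((#|A| == r) && ~~ H A).
Proof. by rewrite inE. Qed.

Lemma sparse_paving_indep_card A : A \in sparse_paving_indep -> #|A| <= r.
Proof. by rewrite in_sparse_paving_indep => /orP [/ltnW | /andP [/eqP -> _]]. Qed.

Hypothesis sparseH : sparse_family.

Lemma sparse_paving_exchange A B :
  A \in sparse_paving_indep -> B \in sparse_paving_indep -> #|A| < #|B| ->
  exists2 x, x \in B :\: A & x |: A \in sparse_paving_indep.
Proof.
move=> indA indB ltAB.
have cardBr := sparse_paving_indep_card indB.
have card_addA x : x \notin A -> #|x |: A| = #|A|.+1.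
  by move=> xA; rewrite cardsU1 xA.
have [x BAx] : exists x, x \in B :\: A.
  apply/set0Pn; apply: contraTneq ltAB => /eqP.
  by rewrite setD_eq0 -leqNgt => /subset_leq_card.
have [_ notAx] := setDP BAx.
have [ltAr | geAr] := ltnP #|A|.+1 r.
  by exists x; rewrite // in_sparse_paving_indep card_addA ?ltAr.
have cardA : #|A| = r.-1 by lia.
have cardB : #|B| = r by lia.
have indep_addA C : C \notin A -> ~~ H (C |: A) -> C |: A \in sparse_paving_indep.
  by move=> notAC notH; rewrite in_sparse_paving_indep card_addA // notH; lia.
have [Hx | notHx] := boolP (H (x |: A)); last by exists x; last exact: indep_addA.
have [y Byx] : exists y, y \in B :\: (x |: A).
  apply/set0Pn; rewrite setD_eq0; apply: contraTN Hx => sB.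
  have -> : x |: A = B by apply/esym/eqP; rewrite eqEcard sB card_addA // cardB; lia.
  by move: indB; rewrite in_sparse_paving_indep cardB ltnn eqxx.
move: Byx; rewrite !inE negb_or => /andP [/andP [yx notAy] By].
have [Hy | notHy] := boolP (H (y |: A)); last by exists y; [rewrite inE notAy | exact: indep_addA].
have Axy : A \subset (x |: A) :&: (y |: A) by rewrite subsetI !subsetUr.
have := sparseH Hx Hy; rewrite -cardA subset_leq_card // => /(_ isT) exy.
by move: (setU11 y A); rewrite -exy in_setU1 (negbTE yx) (negbTE notAy).
Qed.

Lemma sparse_paving_matroid : 0 < r -> is_matroid sparse_paving_indep.
Proof.
move=> r_gt0; split.
- by apply/set0Pn; exists set0; rewrite in_sparse_paving_indep cards0 r_gt0.
- move=> A B indB sAB; have [ltAr | geAr] := ltnP #|A| r.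
    by rewrite in_sparse_paving_indep ltAr.
  suff -> : A = B by [].
  apply/eqP; rewrite eqEcard sAB; exact: leq_trans (sparse_paving_indep_card indB) geAr.
- exact: sparse_paving_exchange.
Qed.

Lemma sparse_paving_bases :
  (exists D : {set T}, (#|D| == r) && ~~ H D) ->
  matroid_bases sparse_paving_indep = [set B : {set T} | (#|B| == r) && ~~ H B].
Proof.
move=> [D baseD]; apply/setP => B; rewrite inE [in RHS]inE; apply/andP/idP.
- move=> [indB /forall_inP maxB]; move: (indB).
  rewrite in_sparse_paving_indep => /orP [ltBr | //]; exfalso.
  have indD : D \in sparse_paving_indep by rewrite in_sparse_paving_indep baseD orbT.
  have [|x DBx indxB] := sparse_paving_exchange indB indD; first by rewrite (eqP (andP baseD).1).
  move: (maxB _ indxB); rewrite subsetUr => /eqP eqxB.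
  by move: DBx; rewrite -eqxB inE setU11.
- move=> baseB; split; first by rewrite in_sparse_paving_indep baseB orbT.
  apply/forall_inP => C indC; apply/implyP => sBC.
  by rewrite eq_sym eqEcard sBC (eqP (andP baseB).1) sparse_paving_indep_card.
Qed.

End SparsePaving.

Definition two_blocks (m a b : nat) : {set 'I_m} :=
  [set x : 'I_m | ((val x)./2 == a) || ((val x)./2 == b)].

Lemma card_le2_eq_half m (A : {set 'I_m}) :
  {in A &, forall x y, (val x)./2 = (val y)./2} -> #|A| <= 2.
Proof.
move=> same_half.
rewrite -card_bool -(card_in_imset (f := fun x : 'I_m => odd (val x))).
  exact: max_card.
move=> x y Ax Ay /= oddxy; apply: val_inj.
by rewrite -[val x]odd_double_half -[val y]odd_double_half oddxy (same_half _ _ Ax Ay).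
Qed.

Lemma two_blocks_sparse m a b c d :
  3 <= #|two_blocks m a b :&: two_blocks m c d| -> two_blocks m a b = two_blocks m c d.
Proof.
set A := _ :&: _ => cardA.
have [same | ] := boolP [forall x in A, forall y in A, (val x)./2 == (val y)./2].
  suff : #|A| <= 2 by lia.
  by apply: card_le2_eq_half => x y Ax Ay; apply/eqP/(forall_inP (forall_inP same x Ax)).
rewrite negb_forall_in => /exists_inP [x Ax]; rewrite negb_forall_in => /exists_inP [y Ay xy].
move: Ax Ay; rewrite !inE => /andP [xab xcd] /andP [yab ycd].
apply/setP => z; rewrite !inE; apply/idP/idP => ?; lia.
Qed.

Lemma in_H_two_blocks n (B : {set 'I_(2 * n)}) :
  in_H B -> exists a b, B = two_blocks (2 * n) a b.
Proof.
case/orP => /existsP [k /andP [k_ge2 /forallP Bk]].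
- exists 0, (k - 1); apply/setP => x; rewrite (eqP (Bk x)) !inE -!divn2.
  by apply/idP/idP => ?; lia.
- exists (k - 1), k; apply/setP => x; rewrite (eqP (Bk x)) !inE -!divn2.
  by apply/idP/idP => ?; lia.
Qed.

Lemma in_H_sparse n : sparse_family 4 (@in_H n).
Proof.
move=> X Y /in_H_two_blocks [a [b ->]] /in_H_two_blocks [c [d ->]].
exact: two_blocks_sparse.
Qed.

Lemma exists_4set_notin_H n : 4 <= n ->
  exists D : {set 'I_(2 * n)}, (#|D| == 4) && ~~ in_H D.
Proof.
move=> n_ge4.
have lt0 : 0 < 2 * n by lia.
have lt2 : 2 < 2 * n by lia.
have lt3 : 3 < 2 * n by lia.
have lt4 : 4 < 2 * n by lia.
have lt6 : 6 < 2 * n by lia.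
have lt7 : 7 < 2 * n by lia.
exists (Ordinal lt2 |: (Ordinal lt3 |: (Ordinal lt6 |: [set Ordinal lt7]))); apply/andP; split.
  by rewrite !cardsU1 cards1 !inE -!val_eqE.
apply/negP; case/orP => /existsP [k /andP [k_ge2 /forallP Dk]].
- by move: (Dk (Ordinal lt0)); rewrite !inE -!val_eqE.
- move: (Dk (Ordinal lt2)) (Dk (Ordinal lt4)); rewrite !inE -!val_eqE /=.
  by move=> /eqP D2 /eqP D4; lia.
Qed.

Theorem proposition3p2 (n : nat) (hn : 4 <= n) :
  exists I : {set {set 'I_(2 * n)}},
    is_matroid I /\
    matroid_bases I = [set B : {set 'I_(2 * n)} | (#|B| == 4) && ~~ in_H B].
Proof.
exists (sparse_paving_indep 4 (@in_H n)); split.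
  exact: sparse_paving_matroid (@in_H_sparse n) isT.
exact: sparse_paving_bases (@in_H_sparse n) (exists_4set_notin_H hn).
Qed.
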